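(* Let $k\ge1$, $n\ge 2k+1$ and $x\in X_{n,k}$. Then $d(f(x))=d(x)$; hence the number of descents is the same for all strings on the cycle $C(x)=(x,f(x),f^2(x),\dots)$.
   Context: $X_{n,k}$ is the set of binary strings of length $n$ with exactly $k$ ones, positions taken cyclically modulo $n$. Cyclic parenthesis matching: regard $x$ as cyclic, $1$s as opening and $0$s as closing brackets; each $1$ at position $i$ is matched to the last $0$ of the shortest cyclic substring starting at $i$ going right that contains equally many $0$s and $1$s (every $1$ is matched; $n-2k$ zeros are unmatched). $f(x)$ is obtained from $x$ by complementing all matched bits. $d(x)$ is the number of cyclic descents of $x$, i.e. the number of positions $i\in[n]$ with $x_i=1$ and $x_{i+1}=0$ (indices mod $n$). *)

From mathcomp Require Import all_boot.
Set Implicit Arguments. Unset Strict Implicit. Unset Printing Implicit Defensive.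

(* Binary strings of length n are sequences x : seq bool with size x = n;
   true = 1 (opening bracket), false = 0 (closing bracket).
   Positions are 0, ..., n-1, taken cyclically modulo n = size x. *)

Definition cbit (x : seq bool) (i : nat) : bool := nth false x (i %% size x).

Definition inX (n k : nat) (x : seq bool) : bool :=
  (size x == n) && (count id x == k).

Definition csub (x : seq bool) (i l : nat) : seq bool :=
  mkseq (fun j => cbit x (i + j)) l.

Definition balanced (x : seq bool) (i l : nat) : bool :=
  count id (csub x i l) == count negb (csub x i l).

Definition shortest_bal (x : seq bool) (i l : nat) : bool :=
  [&& 0 < l, balanced x i l & all (fun l' => ~~ balanced x i l') (iota 1 l.-1)].

Definition matched (x : seq bool) (p : nat) : bool :=
  cbit x p ||
  has (fun i => has (fun l =>
     [&& cbit x i, shortest_bal x i l & (i + l - 1) %% size x == p %% size x])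
       (iota 1 (size x))) (iota 0 (size x)).

Definition f (x : seq bool) : seq bool :=
  mkseq (fun p => cbit x p (+) matched x p) (size x).

Definition d (x : seq bool) : nat :=
  count (fun i => cbit x i && ~~ cbit x i.+1) (iota 0 (size x)).

(* Every 1 of x is matched, so f turns a factor 10 of x into 01, while 11 becomes 00
   and 01 becomes ?0.  A factor 00 of x never becomes 01: if the second 0 closes the
   shortest balanced substring opened by some 1, then the first 0 closes a shorter
   balanced substring nested inside it.  Hence the ascents 01 of f(x) sit exactly at
   the descents 10 of x, and in a cyclic string ascents and descents are equinumerous.
   None of this uses the hypotheses on n and k. *)

From mathcomp Require Import all_boot.
From mathcomp Require Import zify.

Set Implicit Arguments.
Unset Strict Implicit.
Unset Printing Implicit Defensive.

Lemma count_descents_ascents_shift (a : nat -> bool) (s : seq nat) :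
  count (fun i => a i && ~~ a i.+1) s + count (fun i => a i.+1) s
  = count (fun i => ~~ a i && a i.+1) s + count a s.
Proof. by elim: s => //= j s IH; case: (a j); case: (a j.+1) => /=; lia. Qed.

Lemma count_iota_succ_cyclic (a : nat -> bool) n : a n = a 0 ->
  count (fun i => a i.+1) (iota 0 n) = count a (iota 0 n).
Proof.
case: n => // m a_cyc.
have -> : count (fun i => a i.+1) (iota 0 m.+1) = count a (iota 1 m.+1).
  by rewrite (iotaDl 1 0) count_map.
by rewrite [in RHS]/= -(addn1 m) iotaD count_cat /= a_cyc addn0 addnC.
Qed.

Lemma count_descents_ascents_cyclic (a : nat -> bool) n : a n = a 0 ->
  count (fun i => a i && ~~ a i.+1) (iota 0 n)
  = count (fun i => ~~ a i && a i.+1) (iota 0 n).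
Proof.
move=> a_cyc; have := count_descents_ascents_shift a (iota 0 n).
by rewrite count_iota_succ_cyclic //; lia.
Qed.

Lemma cbit_mod x i : cbit x (i %% size x) = cbit x i.
Proof. by rewrite /cbit modn_mod. Qed.

Lemma csub_mod x i l : csub x (i %% size x) l = csub x i l.
Proof. by apply: eq_mkseq => j; rewrite /cbit modnDml. Qed.

Lemma shortest_bal_mod x i l : shortest_bal x (i %% size x) l = shortest_bal x i l.
Proof.
have bal_mod l' : balanced x (i %% size x) l' = balanced x i l'.
  by rewrite /balanced csub_mod.
by rewrite /shortest_bal bal_mod; congr [&& _, _ & _]; apply: eq_all => l'; rewrite bal_mod.
Qed.

Lemma matched_mod x p : matched x (p %% size x) = matched x p.
Proof. by rewrite /matched cbit_mod modn_mod. Qed.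

Lemma cbit_f x p : cbit (f x) p = cbit x p (+) matched x p.
Proof.
case: x => [|b s]; first by rewrite /f /cbit /matched /= /cbit !nth_nil.
rewrite {1}/cbit /f size_mkseq nth_mkseq; last by rewrite ltn_pmod.
by rewrite -/(cbit _ (p %% _)) cbit_mod matched_mod.
Qed.

Definition ones x i t := count id (csub x i t).

Lemma onesS x i t : ones x i t.+1 = ones x i t + cbit x (i + t).
Proof. by rewrite /ones /csub /mkseq -addn1 iotaD map_cat count_cat /= addn0. Qed.

Lemma onesD x i a b : ones x i (a + b) = ones x i a + ones x (i + a) b.
Proof.
elim: b => [|b IH]; first by rewrite addn0 /ones /csub /= addn0.
by rewrite addnS !onesS IH -!addnA.
Qed.

Lemma ones1 x i : ones x i 1 = cbit x i.
Proof. by rewrite onesS addn0. Qed.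

Lemma balancedE x i l : balanced x i l = (2 * ones x i l == l).
Proof.
rewrite /balanced /ones.
have : count id (csub x i l) + count negb (csub x i l) = l.
  by rewrite -[in RHS](size_mkseq (fun j => cbit x (i + j)) l) -(count_predC id).
by move=> ?; apply/eqP/eqP; lia.
Qed.

Lemma shortest_balE x i l : shortest_bal x i l =
  [&& 0 < l, 2 * ones x i l == l & all (fun s => 2 * ones x i s != s) (iota 1 l.-1)].
Proof.
by rewrite /shortest_bal balancedE; congr [&& _, _ & _]; apply: eq_all => s; rewrite balancedE.
Qed.

Lemma cbit_congr x i j : i = j %[mod size x] -> cbit x i = cbit x j.
Proof. by rewrite /cbit => ->. Qed.

Lemma matched_of_cbit x p : cbit x p -> matched x p.
Proof. by rewrite /matched => ->. Qed.

Lemma matched_end x i l p : cbit x i -> shortest_bal x i l -> l <= size x ->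
  i + l - 1 = p %[mod size x] -> matched x p.
Proof.
move=> xi sb l_le e; have l_gt0 : 0 < l by case/and3P: sb.
apply/orP; right; apply/hasP; exists (i %% size x).
  by rewrite mem_iota add0n ltn_pmod //; lia.
apply/hasP; exists l; first by rewrite mem_iota; lia.
by rewrite cbit_mod xi shortest_bal_mod sb /= -addnBA // modnDml addnBA // e.
Qed.

Lemma matched_after_one x p : cbit x p -> ~~ cbit x p.+1 -> matched x p.+1.
Proof.
move=> xp xp1; have size_gt1 : 1 < size x.
  rewrite ltnNge leq_eqVlt ltnS leqn0; apply/negP => /orP [/eqP size1 | /nilP x0].
    by case/negP: xp1; rewrite (@cbit_congr _ _ p) // size1 !modn1.
  by move: xp; rewrite x0 /cbit nth_nil.
apply: (@matched_end x p 2) => //; last by rewrite addn2 subn1.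
by rewrite shortest_balE /= onesS ones1 addn1 xp (negbTE xp1).
Qed.

Lemma shortest_bal_excess x i l : cbit x i -> shortest_bal x i l ->
  forall t, 0 < t < l -> t < 2 * ones x i t.
Proof.
rewrite shortest_balE => xi /and3P [_ _ /allP unbal].
elim=> [//|t IH] /andP [_ t_lt].
have /eqP unbal_t := unbal t.+1 ltac:(rewrite mem_iota; lia).
case: t IH t_lt unbal_t => [|t] IH t_lt unbal_t; first by rewrite ones1 xi.
by move: unbal_t (IH ltac:(lia)); rewrite onesS; lia.
Qed.

Lemma shortest_bal_after_excess x i t m : 0 < m ->
  2 * ones x i t = t + 1 -> 2 * ones x i (t + m) = t + m + 1 ->
  (forall s, 0 < s < m -> t + s + 1 < 2 * ones x i (t + s)) ->
  shortest_bal x (i + t) m.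
Proof.
move=> m_gt0 exc_t exc_tm exc_mid; rewrite shortest_balE m_gt0 /=.
apply/andP; split; first by move: exc_tm; rewrite onesD; lia.
apply/allP => s; rewrite mem_iota => s_range.
by have := exc_mid s ltac:(lia); rewrite onesD; lia.
Qed.

Lemma shortest_bal_nested x i l : 0 < l -> cbit x i ->
  (forall t, 0 < t < l -> t < 2 * ones x i t) ->
  2 * ones x i l.-1 = l -> 2 * ones x i l.-2 = l ->
  exists2 t, t < l.-2 & cbit x (i + t) && shortest_bal x (i + t) (l.-1 - t).
Proof.
move=> l_gt0 xi exc exc_l1 exc_l2.
have l_gt2 : 2 < l.
  case: (ltnP 2 l) => // l_le2; move: exc_l2.
  have -> : l.-2 = 0 by lia.
  by rewrite /ones /=; lia.
(* t is the last prefix length below l-2 whose excess 2 * ones - t is one; the 1 right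
   after it opens a balanced substring closing at l-2, all of whose proper prefixes
   have positive excess. *)
pose P t := (0 < t <= l.-2) && (2 * ones x i t == t + 1).
have P1 : P 1 by rewrite /P ones1 xi /=; lia.
have P_le t : P t -> t <= l.-2 by case/andP => /andP [].
case: (ex_maxnP (ex_intro P 1 P1) P_le) => t /andP [t_range /eqP exc_t] t_max.
have t_lt : t < l.-2.
  rewrite ltn_neqAle (andP t_range).2 andbT; apply/eqP => t_eq.
  by move: exc_t; rewrite t_eq exc_l2; lia.
have exc_after s : t < s <= l.-2 -> s + 1 < 2 * ones x i s.
  move=> s_range; have := exc s ltac:(lia).
  have := t_max s; rewrite /P; case: eqP => [_ /(_ _)|]; lia.
exists t => //; apply/andP; split.
  by have := exc_after t.+1 ltac:(lia); rewrite onesS; case: cbit => //=; lia.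
apply: shortest_bal_after_excess => //; first lia.
  by rewrite subnKC //; lia.
by move=> s s_range; apply: exc_after; lia.
Qed.

Lemma matched_nested x p : ~~ cbit x p -> ~~ cbit x p.+1 ->
  matched x p.+1 -> matched x p.
Proof.
move=> xp xp1 /orP [|/hasP [i _ /hasP [l]]]; first by rewrite (negbTE xp1).
rewrite mem_iota => /andP [l_gt0 l_le] /and3P [xi sb /eqP end_l].
have := sb; rewrite shortest_balE => /and3P [_ /eqP bal_l _].
have l_gt1 : 1 < l.
  case: ltnP => // l_le1; move: bal_l; have -> : l = 1 by lia.
  by rewrite ones1 xi.
have exc_l1 : 2 * ones x i l.-1 = l.
  move: bal_l; rewrite -{1}(prednK l_gt0) onesS.
  by rewrite (@cbit_congr _ _ p.+1) ?(negbTE xp1) ?addn0 // -end_l; congr (_ %% _); lia.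
have {end_l} end_l1 : i + l.-2 = p %[mod size x].
  by apply/eqP; rewrite -(eqn_modDr 1) !addn1 -end_l; apply/eqP; congr (_ %% _); lia.
have exc_l2 : 2 * ones x i l.-2 = l.
  move: exc_l1; have -> : l.-1 = l.-2.+1 by lia.
  by rewrite onesS (cbit_congr end_l1) (negbTE xp) addn0.
have [t t_lt /andP [xt sbt]] :=
  shortest_bal_nested l_gt0 xi (shortest_bal_excess xi sb) exc_l1 exc_l2.
apply: (matched_end xt sbt); first lia.
by rewrite -end_l1; congr (_ %% _); lia.
Qed.

Lemma ascent_f x p :
  (~~ cbit (f x) p && cbit (f x) p.+1) = (cbit x p && ~~ cbit x p.+1).
Proof.
rewrite !cbit_f; case xp: (cbit x p); case xp1: (cbit x p.+1).
- by rewrite !matched_of_cbit ?xp ?xp1.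
- by rewrite (matched_of_cbit xp) matched_after_one ?xp ?xp1.
- by rewrite (matched_of_cbit xp1) /= andbF.
- by case m1: (matched x p.+1); rewrite ?andbF // matched_nested ?xp ?xp1.
Qed.

Lemma d_f x : d (f x) = d x.
Proof.
have size_f : size (f x) = size x by rewrite size_mkseq.
rewrite /d -size_f count_descents_ascents_cyclic; last by rewrite /cbit modnn mod0n.
by apply: eq_count => p; rewrite ascent_f.
Qed.

Theorem mainTheorem7 (n k : nat) (x : seq bool) :
  1 <= k -> 2 * k + 1 <= n -> inX n k x ->
  d (f x) = d x /\ (forall m : nat, d (iter m f x) = d x).
Proof.
move=> _ _ _; split=> [|m]; first exact: d_f.
by elim: m => //= m IH; rewrite d_f.
Qed.
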